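(* For a tree $T$, $\lfloor \mathrm{sp}\rfloor(T)=|V(T)|-\mathrm{diam}(T)-1$.
   Context: All graphs are finite, have at least one vertex, have no loops, and may have multiple (parallel) edges. $\mathrm{diam}$ denotes the diameter (maximum distance between two vertices, distance measured in number of edges). A unique shortest path is a shortest $u$–$v$ path $P$ such that every $u$–$v$ path with the same number of vertices is identical to $P$, where two paths with different edge sequences are different even if their vertex sequences agree; a single vertex is a unique shortest path. The parade number $\mathrm{usp}(G)$ is the largest number of vertices of a unique shortest path in $G$. The spectator number is $\mathrm{sp}(G)=|V(G)|-\mathrm{usp}(G)$. A minor of $H$ is any graph obtained from $H$ by a sequence of: deleting an isolated vertex, deleting an edge, contracting an edge that has no edge parallel to it. The spectator floor $\lfloor \mathrm{sp}\rfloor(G)$ is the minimum of $\mathrm{sp}(H)$ over all graphs $H$ of which $G$ is a minor. *)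

(* Finite multigraphs with vertices 0..nv-1 and an
   edge list (parallel edges = distinct list entries, indexed by position). *)
From mathcomp Require Import all_boot.
Set Implicit Arguments. Unset Strict Implicit. Unset Printing Implicit Defensive.

Record mgraph := MGraph { nv : nat; edges : seq (nat * nat) }.

Definition wf (G : mgraph) : bool :=
  (0 < nv G) &&
  all (fun e : nat * nat => [&& e.1 < nv G, e.2 < nv G & e.1 != e.2]) (edges G).

Definition joins (G : mgraph) (i u v : nat) : bool :=
  (i < size (edges G)) &&
  (let e := nth (0, 0) (edges G) i in
   ((e.1 == u) && (e.2 == v)) || ((e.1 == v) && (e.2 == u))).

Definition is_path (G : mgraph) (vs es : seq nat) : Prop :=
  [/\ vs != [::], uniq vs, all (fun w => w < nv G) vs,
      size es = (size vs).-1 &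
      forall k, k < size es -> joins G (nth 0 es k) (nth 0 vs k) (nth 0 vs k.+1)].

Definition path_from_to (G : mgraph) (u v : nat) (vs es : seq nat) : Prop :=
  is_path G vs es /\ head 0 vs = u /\ last 0 vs = v.

Definition is_usp (G : mgraph) (vs es : seq nat) : Prop :=
  let u := head 0 vs in let v := last 0 vs in
  [/\ path_from_to G u v vs es,
      (forall vs' es', path_from_to G u v vs' es' -> size vs <= size vs') &
      (forall vs' es', path_from_to G u v vs' es' -> size vs' = size vs ->
                       vs' = vs /\ es' = es)].

Definition usp_is (G : mgraph) (k : nat) : Prop :=
  (exists vs es, is_usp G vs es /\ size vs = k) /\
  (forall vs es, is_usp G vs es -> size vs <= k).

Definition sp_is (G : mgraph) (s : nat) : Prop :=
  exists k, usp_is G k /\ s = nv G - k.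

Definition shift (x w : nat) : nat := if x < w then w.-1 else w.

Definition isolated (G : mgraph) (x : nat) : bool :=
  (x < nv G) && all (fun e : nat * nat => (e.1 != x) && (e.2 != x)) (edges G).

Definition del_vertex (G : mgraph) (x : nat) : mgraph :=
  MGraph (nv G).-1 (map (fun e : nat * nat => (shift x e.1, shift x e.2)) (edges G)).

Definition del_edge (G : mgraph) (i : nat) : mgraph :=
  MGraph (nv G) (take i (edges G) ++ drop i.+1 (edges G)).

Definition no_parallel (G : mgraph) (i : nat) : Prop :=
  i < size (edges G) /\
  forall j, j != i -> ~~ joins G j (nth (0, 0) (edges G) i).1 (nth (0, 0) (edges G) i).2.

Definition contract (G : mgraph) (i : nat) : mgraph :=
  let a := (nth (0, 0) (edges G) i).1 in
  let b := (nth (0, 0) (edges G) i).2 in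
  let ren w := shift b (if w == b then a else w) in
  MGraph (nv G).-1
    (map (fun e : nat * nat => (ren e.1, ren e.2))
         (take i (edges G) ++ drop i.+1 (edges G))).

Definition normp (p : nat * nat) : nat * nat := (minn p.1 p.2, maxn p.1 p.2).

Definition iso (G H : mgraph) : Prop :=
  nv G = nv H /\
  exists f : nat -> nat,
    [/\ forall w, w < nv G -> f w < nv H,
        forall w w', w < nv G -> w' < nv G -> f w = f w' -> w = w' &
        perm_eq (map (fun e : nat * nat => normp (f e.1, f e.2)) (edges G))
                (map normp (edges H))].

Inductive minor_step : mgraph -> mgraph -> Prop :=
  | ms_del_vertex G x : isolated G x -> minor_step G (del_vertex G x)
  | ms_del_edge G i : i < size (edges G) -> minor_step G (del_edge G i)
  | ms_contract G i : no_parallel G i -> minor_step G (contract G i)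
  | ms_iso G G' : iso G G' -> minor_step G G'.

(* obtainable H G : G is obtained from H by a sequence of operations,
   all intermediate graphs being graphs (wf) *)
Inductive obtainable (H : mgraph) : mgraph -> Prop :=
  | ob_refl : wf H -> obtainable H H
  | ob_step G1 G2 : obtainable H G1 -> minor_step G1 G2 -> wf G2 -> obtainable H G2.

Definition minor (G H : mgraph) : Prop := obtainable H G.

Definition sp_floor_is (G : mgraph) (s : nat) : Prop :=
  (exists H, wf H /\ minor G H /\ sp_is H s) /\
  (forall H s', wf H -> minor G H -> sp_is H s' -> s <= s').

Definition dist_is (G : mgraph) (u v d : nat) : Prop :=
  (exists vs es, path_from_to G u v vs es /\ size es = d) /\
  (forall vs es, path_from_to G u v vs es -> d <= size es).

Definition diam_is (G : mgraph) (D : nat) : Prop :=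
  (exists u v, [/\ u < nv G, v < nv G & dist_is G u v D]) /\
  (forall u v d, u < nv G -> v < nv G -> dist_is G u v d -> d <= D).

Definition connected (G : mgraph) : Prop :=
  forall u v, u < nv G -> v < nv G -> exists vs es, path_from_to G u v vs es.

(* a cycle: a path with >= 2 vertices closed by a further edge not on it
   (a pair of parallel edges is a cycle of length 2) *)
Definition has_cycle (G : mgraph) : Prop :=
  exists vs es e, [/\ is_path G vs es, 1 < size vs, e \notin es &
                      joins G e (last 0 vs) (head 0 vs)].

Definition is_tree (G : mgraph) : Prop := [/\ wf G, connected G & ~ has_cycle G].

From mathcomp Require Import all_boot zify boolp.
Set Implicit Arguments. Unset Strict Implicit. Unset Printing Implicit Defensive.

(* The upper bound is attained by [T] itself: paths in a tree are unique, so
   every shortest path is a unique shortest path and usp(T) = diam(T) + 1.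

   For the lower bound, mark every connected component of a graph by a triple
   (b, t, d) such that each walk from b to t has at least d edges.  A unique
   shortest path of H yields a marking with
     |V(H)| - #components - sum of the d's <= sp(H),
   and such a marking survives every minor operation: an isolated vertex takes
   its marker (x, x, 0) away, deleting a bridge splits a marker (b, t, d) into
   two markers whose d's add up to at least d - 1, and contracting an edge
   removes one vertex while shortening walks by at most one edge, inside a
   single component.  In the connected graph T the only marker has
   d <= diam(T), so sp(H) >= |V(T)| - diam(T) - 1. *)

(** * Walks *)

Lemma joins_sym G i a b : joins G i a b = joins G i b a.
Proof. by rewrite /joins /= orbC. Qed.

Lemma joins_vertices G i a b :
  wf G -> joins G i a b -> [/\ a < nv G, b < nv G & a != b].
Proof.
case/andP => _ /allP edges_ok /andP[lt_i /=].
have /edges_ok/and3P[lt1 lt2 neq] := mem_nth (0, 0) lt_i.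
by case/orP => /andP[/eqP <- /eqP <-]; rewrite // eq_sym.
Qed.

Lemma joins_ends G i a b c d : joins G i a b -> joins G i c d ->
  (a = c /\ b = d) \/ (a = d /\ b = c).
Proof.
rewrite /joins /= => /andP[_ + ] /andP[_ +].
by case/orP => /andP[/eqP <- /eqP <-] /orP[] /andP[/eqP <- /eqP <-]; auto.
Qed.

Definition adj_in (G : mgraph) (P : pred nat) : rel nat :=
  fun a b => has (fun j => P j && joins G j a b) (iota 0 (size (edges G))).

Definition adj (G : mgraph) : rel nat := adj_in G xpredT.

Lemma adj_inP G (P : pred nat) a b : reflect (exists2 j, P j & joins G j a b) (adj_in G P a b).
Proof.
apply: (iffP hasP) => [[j _ /andP[Pj Jj]]|[j Pj Jj]]; first by exists j.
by exists j; [case/andP: Jj; rewrite mem_iota | rewrite Pj].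
Qed.

Lemma adj_in_sym G (P : pred nat) a b : adj_in G P a b = adj_in G P b a.
Proof. by apply/adj_inP/adj_inP => -[j Pj]; rewrite joins_sym; exists j. Qed.

Lemma adj_sym G a b : adj G a b = adj G b a.
Proof. exact: adj_in_sym. Qed.

Lemma adj_in_vertices G (P : pred nat) a b :
  wf G -> adj_in G P a b -> [/\ a < nv G, b < nv G & a != b].
Proof. by move=> wfG /adj_inP[j _ /(joins_vertices wfG)]. Qed.

Lemma adj_mem G e : e \in edges G -> adj G e.1 e.2.
Proof.
move=> e_in; apply/adj_inP; exists (index e (edges G)) => //.
by rewrite /joins index_mem e_in nth_index // !eqxx.
Qed.

Lemma adj_edge G a b : adj G a b -> exists2 e, e \in edges G & e = (a, b) \/ e = (b, a).
Proof.
case/adj_inP => j _ /andP[j_lt]; have := mem_nth (0, 0) j_lt.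
case: (nth (0, 0) (edges G) j) => e1 e2 e_in /=.
by case/orP => /andP[/eqP <- /eqP <-]; exists (e1, e2); auto.
Qed.

Lemma walk_vertices G (P : pred nat) x p :
  wf G -> path (adj_in G P) x p -> all (fun w => w < nv G) p.
Proof.
move=> wfG; elim: p x => //= y p IHp x /andP[xy yp].
by case: (adj_in_vertices wfG xy) => _ -> _; rewrite (IHp y yp).
Qed.

Fixpoint edge_chain G x r es : bool :=
  match r, es with
  | [::], [::] => true
  | y :: r', e :: es' => joins G e x y && edge_chain G y r' es'
  | _, _ => false
  end.

Lemma edge_chainP G x r es : edge_chain G x r es <->
  size es = size r /\ forall k, k < size es ->
    joins G (nth 0 es k) (nth 0 (x :: r) k) (nth 0 (x :: r) k.+1).
Proof.
elim: r x es => [|y r IHr] x [|e es] /=.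
- by split => // _; split => // k.
- by split => // -[].
- by split => // -[].
split => [/andP[xy /IHr[sz chain]]|[[sz] chain]].
  by split => [|[|k] //= /chain]; rewrite ?sz.
by rewrite (chain 0) //=; apply/IHr; split => // k /(chain k.+1).
Qed.

Lemma edge_chain_size G x r es : edge_chain G x r es -> size es = size r.
Proof. by case/edge_chainP. Qed.

Lemma is_path_cons G x r es : is_path G (x :: r) es <->
  [/\ uniq (x :: r), all (fun w => w < nv G) (x :: r) & edge_chain G x r es].
Proof.
split=> [[_ U A sz chain]|[U A /edge_chainP[sz chain]]]; last by split.
by split => //; apply/edge_chainP; split; first rewrite sz.
Qed.

Lemma is_path_size G vs es : is_path G vs es -> size vs = (size es).+1.
Proof. by case: vs => [[]|x r [_ _ _ -> _]]. Qed.

Lemma is_path_ends G vs es : is_path G vs es -> head 0 vs < nv G /\ last 0 vs < nv G.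
Proof.
case: vs => [[]|x r [_ _ /allP vs_lt _ _]] //.
by split; apply: vs_lt; rewrite /= ?mem_head ?mem_last.
Qed.

Lemma is_path_size_le G vs es : is_path G vs es -> size vs <= nv G.
Proof.
case=> _ U /allP vs_lt _ _; rewrite -(size_iota 0 (nv G)).
by apply: uniq_leq_size => // w /vs_lt; rewrite mem_iota.
Qed.

Lemma edge_chain_walk G (P : pred nat) x r es :
  edge_chain G x r es -> all P es -> path (adj_in G P) x r.
Proof.
elim: r x es => [|y r IHr] x [|e es] //= /andP[xy chain] /andP[Pe Pes].
by rewrite (IHr y es chain Pes) andbT; apply/adj_inP; exists e.
Qed.

Lemma walk_edge_chain G (P : pred nat) x r :
  path (adj_in G P) x r -> exists2 es, edge_chain G x r es & all P es.
Proof.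
elim: r x => [|y r IHr] x /=; first by exists [::].
case/andP => /adj_inP[j Pj xy] /IHr[es chain Pes].
by exists (j :: es); rewrite /= ?xy ?Pj.
Qed.

Lemma walk_shorten_path G (P : pred nat) x p : wf G -> x < nv G -> path (adj_in G P) x p ->
  exists p' es, [/\ is_path G (x :: p') es, all P es,
                    last x p' = last x p & size p' <= size p].
Proof.
move=> wfG x_lt walk; have p_lt := walk_vertices wfG walk.
case: (shortenP walk) => p' walk' U sub.
case: (walk_edge_chain walk') => es chain Pes.
exists p', es; split => //; last by apply: uniq_leq_size => //; case/andP: U.
apply/is_path_cons; split => //=; rewrite x_lt /=.
by apply/allP => w /sub; apply: (allP p_lt).
Qed.

Lemma path_from_to_walk G u v vs es : path_from_to G u v vs es ->
  exists p, [/\ vs = u :: p, path (adj G) u p, last u p = v & size es = size p].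
Proof.
case=> + [+ +]; case: vs => [|x p]; first by case; rewrite eqxx.
move=> /is_path_cons[_ _ chain] /= <- <-; exists p; split => //.
  by apply: edge_chain_walk chain _; apply/allP.
exact: edge_chain_size chain.
Qed.

Lemma walk_rev G (P : pred nat) x p : path (adj_in G P) x p ->
  path (adj_in G P) (last x p) (rev (belast x p)) /\ last (last x p) (rev (belast x p)) = x.
Proof.
move=> walk; split; first by rewrite rev_path; apply: sub_path walk => a b; rewrite adj_in_sym.
by elim: p x {walk} => //= y p IHp x; rewrite rev_cons last_rcons.
Qed.

(** * Reachability and distance *)

Definition reach G u v := exists2 p, path (adj G) u p & last u p = v.

Definition reachb G u v : bool := `[< reach G u v >].

Definition dist_ge G u v d := forall p, path (adj G) u p -> last u p = v -> d <= size p.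

Lemma reach_refl G u : reach G u u.
Proof. by exists [::]. Qed.

Lemma reach_sym G u v : reach G u v -> reach G v u.
Proof. by case=> p /walk_rev[walk' last'] <-; exists (rev (belast u p)). Qed.

Lemma reach_trans G u v w : reach G u v -> reach G v w -> reach G u w.
Proof.
case=> p up <- [q vq <-]; exists (p ++ q); last by rewrite last_cat.
by rewrite cat_path up.
Qed.

Lemma reach_adj G u v : adj G u v -> reach G u v.
Proof. by move=> uv; exists [:: v]; rewrite /= ?uv. Qed.

Lemma reachb_sym G u v : reachb G u v = reachb G v u.
Proof. by apply/asboolP/asboolP => /reach_sym. Qed.

Lemma walk_reach_mem G x p y : path (adj G) x p -> y \in x :: p -> reach G x y.
Proof.
rewrite inE => walk /predU1P[->|y_p]; first exact: reach_refl.
case/splitPr: y_p walk => p1 p2; rewrite cat_path => /andP[walk1 /= /andP[step _]].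
by exists (rcons p1 y); rewrite ?last_rcons // rcons_path walk1.
Qed.

Lemma ex_min_nat (P : nat -> Prop) :
  (exists n, P n) -> exists n, P n /\ forall m, P m -> n <= m.
Proof.
move=> [n Pn]; have exP : exists n, `[< P n >] by exists n; apply/asboolP.
by case: (ex_minnP exP) => m /asboolP Pm m_min; exists m; split => // k /asboolP/m_min.
Qed.

Lemma shortest_walk G u v : reach G u v ->
  exists p, [/\ path (adj G) u p, last u p = v & dist_ge G u v (size p)].
Proof.
move=> uv; have [|n [[p [walk p_end <-]] n_min]] :=
  @ex_min_nat (fun n => exists p, [/\ path (adj G) u p, last u p = v & size p = n]).
  by case: uv => p walk p_end; exists (size p), p.
by exists p; split => // q walk' q_end; apply: n_min; exists q.
Qed.

Lemma walk_path_from_to G u p : wf G -> u < nv G -> path (adj G) u p ->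
  exists vs es, path_from_to G u (last u p) vs es /\ size es <= size p.
Proof.
move=> wfG u_lt walk.
case: (walk_shorten_path wfG u_lt walk) => p' [es [p'_path _ p'_end p'_size]].
have /is_path_cons[_ _ /edge_chain_size size_es] := p'_path.
by exists (u :: p'), es; rewrite size_es; split => //; split => //=; rewrite p'_end.
Qed.

Lemma shortest_walk_dist G u v p : wf G -> u < nv G ->
  path (adj G) u p -> last u p = v -> dist_ge G u v (size p) -> dist_is G u v (size p).
Proof.
move=> wfG u_lt walk p_end p_min; split; last first.
  by move=> vs es /path_from_to_walk[q [_ walk' q_end ->]]; apply: p_min.
have [vs [es [uv_path es_size]]] := walk_path_from_to wfG u_lt walk.
exists vs, es; split; first by rewrite -p_end.
have [q [_ walk' q_end es_q]] := path_from_to_walk uv_path.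
by apply/eqP; rewrite eqn_leq es_size es_q p_min // q_end.
Qed.

Lemma dist_is_dist_ge G u v d : wf G -> u < nv G -> dist_is G u v d -> dist_ge G u v d.
Proof.
move=> wfG u_lt [_ d_min] p walk p_end.
have [vs [es [uv_path es_size]]] := walk_path_from_to wfG u_lt walk.
by apply: leq_trans es_size; apply: (d_min vs); rewrite -p_end.
Qed.

Section Subgraph.
Variables G G' : mgraph.
Hypothesis adj_sub : forall a b, adj G' a b -> adj G a b.

Lemma reach_sub u v : reach G' u v -> reach G u v.
Proof. by case=> p walk p_end; exists p; first exact: sub_path walk. Qed.

Lemma dist_ge_sub u v d : dist_ge G u v d -> dist_ge G' u v d.
Proof. by move=> uv_d p walk; apply: uv_d; apply: sub_path walk. Qed.

End Subgraph.

(** * Paths in acyclic graphs *)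

Lemma edge_chain_avoid G w r es e x z :
  edge_chain G w r es -> x \notin w :: r -> joins G e x z -> all (predC1 e) es.
Proof.
elim: r w es => [|w' r IHr] w [|e' es] //= /andP[ww' chain].
rewrite inE negb_or => /andP[xw xr] xz; rewrite (IHr w' es chain xr xz) andbT.
apply: contraNneq xw => ee'; rewrite ee' in ww'.
by case: (joins_ends ww' xz) => -[-> w'_x] //; rewrite w'_x inE eqxx in xr.
Qed.

Section Acyclic.
Variable G : mgraph.
Hypotheses (wfG : wf G) (acyclicG : ~ has_cycle G).

Lemma acyclic_bridge e x y p : joins G e x y ->
  path (adj_in G (predC1 e)) x p -> last x p != y.
Proof.
move=> xy walk; apply/eqP => end_y.
have [x_lt _ x_neq_y] := joins_vertices wfG xy.
case: (walk_shorten_path wfG x_lt walk) => p' [es [pathG avoid end' _]].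
apply: acyclicG; exists (x :: p'), es, e; split => //.
- by case: p' end' {pathG avoid} => [/= x_y|]; first by rewrite x_y end_y eqxx in x_neq_y.
- by apply/negP => /(allP avoid); rewrite /= eqxx.
- by rewrite /= end' end_y joins_sym.
Qed.

(* Two edge chains from [x] that leave [x] by different edges and meet again
   would give a walk from [x] to [y] avoiding the edge [e] between them. *)
Lemma acyclic_fork x y y' r r' e e' es es' :
  uniq (x :: y :: r) -> uniq (x :: y' :: r') ->
  edge_chain G x (y :: r) (e :: es) -> edge_chain G x (y' :: r') (e' :: es') ->
  last y r = last y' r' -> e' != e -> False.
Proof.
move=> /andP[x_r _] /andP[x_r' _] /= /andP[xy chain] /andP[xy' chain'] meet e'_e.
have avoid : all (predC1 e) es := edge_chain_avoid chain x_r xy.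
have avoid' : all (predC1 e) (e' :: es').
  by rewrite /= e'_e (edge_chain_avoid chain' x_r' xy).
have walk' := edge_chain_walk (x := x) (r := y' :: r') (es := e' :: es').
have walk'' : path (adj_in G (predC1 e)) x (y' :: r') by apply: walk' => //=; rewrite xy'.
case: (walk_rev (edge_chain_walk chain avoid)) => back back_end.
have detour : path (adj_in G (predC1 e)) x (y' :: r' ++ rev (belast y r)).
  by rewrite -cat_cons cat_path walk'' /= -meet back.
by have := acyclic_bridge xy detour; rewrite -cat_cons last_cat /= -meet back_end eqxx.
Qed.

Lemma acyclic_edge_chain_unique x r r' es es' :
  uniq (x :: r) -> uniq (x :: r') -> edge_chain G x r es -> edge_chain G x r' es' ->
  last x r = last x r' -> r = r' /\ es = es'.
Proof.
elim: r x r' es es' => [|y r IHr] x [|y' r'] [|e es] [|e' es'] //=.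
- by move=> _ /andP[+ _] _ _ x_end; rewrite x_end mem_last.
- by move=> /andP[+ _] _ _ _ x_end; rewrite -x_end mem_last.
move=> U U' chain chain' meet.
have [e'_e|] := eqVneq e' e; last by move/(acyclic_fork U U' chain chain' meet).
move: chain chain'; rewrite e'_e => /andP[xy chain] /andP[xy' chain'].
have y'_y : y' = y.
  case: (joins_ends xy xy') => -[// x_y' y_x].
  by move: U; rewrite /= y_x inE eqxx.
rewrite y'_y in U' chain' meet *.
case: (IHr y r' es es' _ _ chain chain' meet) => [||-> ->] //.
- by case/andP: U.
- by case/andP: U'.
Qed.

Lemma acyclic_path_unique u v vs es vs' es' :
  path_from_to G u v vs es -> path_from_to G u v vs' es' -> vs = vs' /\ es = es'.
Proof.
case: vs => [[[]] //|x r [/is_path_cons[U _ chain] [/= x_u end_r]]].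
case: vs' => [[[]] //|x' r' [/is_path_cons[U' _ chain'] [/= x'_u end_r']]].
subst x x'.
case: (acyclic_edge_chain_unique U U' chain chain'); first by rewrite end_r end_r'.
by move=> -> ->.
Qed.

End Acyclic.

Lemma usp_dist G vs es : is_usp G vs es -> dist_is G (head 0 vs) (last 0 vs) (size es).
Proof.
case=> vs_path vs_min _; split; first by exists vs, es.
move=> vs' es' /[dup] [[vs'_path _]] /vs_min.
by rewrite (is_path_size vs_path.1) (is_path_size vs'_path).
Qed.

Lemma usp_size_le_diam G D vs es : diam_is G D -> is_usp G vs es -> size vs <= D.+1.
Proof.
case=> _ diam_max usp; have vs_path : is_path G vs es by case: usp => -[].
case: (is_path_ends vs_path) => head_lt last_lt.
by rewrite (is_path_size vs_path) ltnS (diam_max _ _ _ head_lt last_lt (usp_dist usp)).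
Qed.

Lemma tree_usp T D : is_tree T -> diam_is T D -> usp_is T D.+1.
Proof.
case=> wfT _ acyclicT diamT; split; last by move=> vs es; apply: usp_size_le_diam.
case: (diamT) => -[u [v [_ _ [[vs [es [uv_path size_es]]] uv_min]]]] _.
exists vs, es; split; last by rewrite (is_path_size uv_path.1) size_es.
case: (uv_path) => vs_path [vs_head vs_last]; rewrite /is_usp vs_head vs_last.
split=> // vs' es' uv_path'.
  by rewrite (is_path_size vs_path) (is_path_size uv_path'.1) ltnS size_es (uv_min _ _ uv_path').
by case: (acyclic_path_unique wfT acyclicT uv_path' uv_path) => -> ->.
Qed.

Lemma tree_sp T D : is_tree T -> diam_is T D -> sp_is T (nv T - D - 1).
Proof. by move=> treeT diamT; exists D.+1; split; [apply: tree_usp | lia]. Qed.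

(** * Component markers *)

Notation marker := (nat * nat * nat)%type.
Notation base m := m.1.1.
Notation tip m := m.1.2.
Notation gap m := m.2.

Definition vertex G : pred nat := fun w => w < nv G.

Definition marks G (A : pred nat) (m : marker) : Prop :=
  [/\ A (base m), A (tip m), reach G (base m) (tip m) & dist_ge G (base m) (tip m) (gap m)].

Definition apart G : rel marker := fun m m' => ~~ reachb G (base m) (base m').

Definition component_markers G (A : pred nat) (ms : seq marker) : Prop :=
  [/\ {in ms, forall m, marks G A m}, pairwise (apart G) ms &
      forall w, A w -> exists2 m, m \in ms & reach G w (base m)].

Definition spectator_bound G s : Prop :=
  exists2 ms, component_markers G (vertex G) ms &
              nv G <= s + size ms + \sum_(m <- ms) gap m.

Lemma apart_irr G m : ~~ apart G m m.
Proof. by rewrite negbK; apply/asboolP/reach_refl. Qed.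

Lemma apart_sym G : symmetric (apart G).
Proof. by move=> m m'; rewrite /apart reachb_sym. Qed.

Lemma pairwise_sym_mem (T : eqType) (r : rel T) s x y : symmetric r ->
  pairwise r s -> x \in s -> y \in s -> x != y -> r x y.
Proof.
move=> r_sym; elim: s => //= z s IHs /andP[/allP z_s s_r].
rewrite !inE => /predU1P[->|x_s] /predU1P[->|y_s]; rewrite ?eqxx // => x_y.
- by apply: z_s.
- by rewrite r_sym; apply: z_s.
- exact: IHs.
Qed.

Lemma component_markers_uniq G A ms : component_markers G A ms -> uniq ms.
Proof. by case=> _ ms_apart _; apply: pairwise_uniq ms_apart => m; apply/negbTE/apart_irr. Qed.

Lemma markers_disjoint G A ms m m' : component_markers G A ms ->
  m \in ms -> m' \in ms -> reach G (base m) (base m') -> m = m'.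
Proof.
case=> _ ms_apart _ m_in m'_in m_m'; apply/eqP/negP => /negP neq.
by move: (pairwise_sym_mem (@apart_sym G) ms_apart m_in m'_in neq) => /asboolP.
Qed.

Lemma marks_trivial G (A : pred nat) w : A w -> marks G A (w, w, 0).
Proof. by split => //; apply: reach_refl. Qed.

Lemma markers_extend G (A : pred nat) m ws : marks G A m -> all A ws ->
  exists2 ms, m \in ms & [/\ {in ms, forall m, marks G A m}, pairwise (apart G) ms &
                           {in ws, forall w, exists2 m', m' \in ms & reach G w (base m')}].
Proof.
move=> m_marks; elim: ws => [_|w ws IHws /andP[Aw /IHws[ms m_in [ms_marks ms_apart ms_cover]]]].
  exists [:: m]; first exact: mem_head.
  by split => // m'; rewrite inE => /eqP->.
have [[m' m'_in w_m']|w_new] := EM (exists2 m', m' \in ms & reach G w (base m')).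
  exists ms => //; split => // x.
  by rewrite inE => /predU1P[->|/ms_cover //]; exists m'.
exists ((w, w, 0) :: ms); rewrite ?inE ?m_in ?orbT //; split.
- by move=> x; rewrite inE => /predU1P[->|/ms_marks //]; apply: marks_trivial.
- rewrite /= ms_apart andbT; apply/allP => x x_in; apply/asboolP => w_x.
  by apply: w_new; exists x.
- move=> x; rewrite inE => /predU1P[->|/ms_cover[m'' m''_in x_m'']].
    by exists (w, w, 0); rewrite ?inE ?eqxx //; apply: reach_refl.
  by exists m''; rewrite // inE m''_in orbT.
Qed.

Lemma exists_component_markers G m : marks G (vertex G) m ->
  exists2 ms, component_markers G (vertex G) ms & m \in ms.
Proof.
move=> m_marks; have : all (vertex G) (iota 0 (nv G)).
  by apply/allP => w; rewrite mem_iota.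
case/(markers_extend m_marks) => ms m_in [ms_marks ms_apart ms_cover].
by exists ms => //; split => // w w_lt; apply: ms_cover; rewrite mem_iota.
Qed.

Lemma usp_marks G vs es : wf G -> is_usp G vs es ->
  marks G (vertex G) (head 0 vs, last 0 vs, size es).
Proof.
move=> wfG usp; have [[vs_path ends] _ _] := usp.
have [head_lt last_lt] := is_path_ends vs_path.
split=> //=; last exact: dist_is_dist_ge (usp_dist usp).
by case: (path_from_to_walk (conj vs_path ends)) => p [_ walk p_end _]; exists p.
Qed.

Lemma spectator_bound_of_sp G s : wf G -> sp_is G s -> spectator_bound G s.
Proof.
move=> wfG [k [[[vs [es [usp <-]]] _] ->]].
have [[vs_path _] _ _] := usp.
case: (exists_component_markers (usp_marks wfG usp)) => ms ms_markers m_in.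
have ms_size : 0 < size ms by case: (ms) m_in.
exists ms => //; rewrite (big_rem _ m_in) /=.
have := is_path_size_le vs_path; rewrite (is_path_size vs_path).
by move: ms_size; lia.
Qed.

Lemma connected_markers G ms : wf G -> connected G ->
  component_markers G (vertex G) ms -> exists m, ms = [:: m].
Proof.
move=> /andP[nv_gt0 _] connG [ms_marks ms_apart ms_cover].
case: ms ms_marks ms_apart ms_cover => [|m [|m' ms]] ms_marks + ms_cover.
- by case: (ms_cover 0 nv_gt0).
- by exists m.
rewrite /= => /andP[/andP[/asboolP m_m' _] _]; exfalso; apply: m_m'.
have [m_lt _ _ _] := ms_marks m (mem_head _ _).
have [m'_lt _ _ _] : marks G (vertex G) m' by apply: ms_marks; rewrite !inE eqxx orbT.
case: (connG _ _ m_lt m'_lt) => vs [es /path_from_to_walk[p [_ walk p_end _]]].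
by exists p.
Qed.

Lemma tree_spectator_bound T D s :
  is_tree T -> diam_is T D -> spectator_bound T s -> nv T - D - 1 <= s.
Proof.
move=> [wfT connT _] [_ diam_max] [ms ms_markers ms_count].
case: (connected_markers wfT connT ms_markers) => m ms_m.
subst ms; case: ms_markers ms_count => ms_marks _ _; rewrite big_seq1 /=.
have [b_lt t_lt b_t gap_min] := ms_marks m (mem_head _ _).
case: (shortest_walk b_t) => p [walk p_end p_min].
have := diam_max _ _ _ b_lt t_lt (shortest_walk_dist wfT b_lt walk p_end p_min).
by have := gap_min p walk p_end; lia.
Qed.

Section VertexMap.
Variables (G G' : mgraph) (A : pred nat) (phi : nat -> nat).
Hypothesis phi_vertex : forall w, A w -> phi w < nv G'.
Hypothesis phi_onto : forall w', w' < nv G' -> exists2 w, A w & phi w = w'.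
Hypothesis reach_phi : forall u v, A u -> A v -> reach G' (phi u) (phi v) <-> reach G u v.

Lemma component_markers_map (gap' : marker -> nat) ms :
  component_markers G A ms ->
  {in ms, forall m, dist_ge G' (phi (base m)) (phi (tip m)) (gap' m)} ->
  component_markers G' (vertex G') [seq (phi (base m), phi (tip m), gap' m) | m <- ms].
Proof.
move=> [ms_marks ms_apart ms_cover] gap'_le; split.
- move=> _ /mapP[m m_in ->]; have [Ab At b_t _] := ms_marks m m_in.
  by split; [apply: phi_vertex | apply: phi_vertex | apply/reach_phi | apply: gap'_le].
- rewrite pairwise_map; apply: (@sub_in_pairwise _ (mem ms)) ms_apart; last exact/allP.
  move=> m1 m2 m1_in m2_in /=; apply: contra => /asboolP m1_m2; apply/asboolP.
  have [A1 _ _ _] := ms_marks m1 m1_in; have [A2 _ _ _] := ms_marks m2 m2_in.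
  by apply/reach_phi.
- move=> w' /phi_onto[w Aw <-]; have [m m_in w_m] := ms_cover w Aw.
  exists (phi (base m), phi (tip m), gap' m); first exact: map_f.
  by have [Ab _ _ _] := ms_marks m m_in; apply/reach_phi.
Qed.

Lemma spectator_bound_map s (gap' : marker -> nat) ms :
  component_markers G A ms ->
  {in ms, forall m, dist_ge G' (phi (base m)) (phi (tip m)) (gap' m)} ->
  nv G' <= s + size ms + \sum_(m <- ms) gap' m -> spectator_bound G' s.
Proof.
move=> ms_markers gap'_le count.
exists [seq (phi (base m), phi (tip m), gap' m) | m <- ms].
  exact: component_markers_map.
by rewrite size_map big_map.
Qed.

End VertexMap.

(** * Deleting an isolated vertex *)

Lemma shiftE x w : shift x w = unbump x w.
Proof. by rewrite /shift /unbump; case: ltnP => _; rewrite ?subn1 ?subn0. Qed.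

Lemma shift_bump x a : shift x (bump x a) = a.
Proof. by rewrite shiftE bumpK. Qed.

Lemma bump_shift x w : w != x -> bump x (shift x w) = w.
Proof. by rewrite shiftE => w_x; apply: unbumpK. Qed.

Lemma shift_eq x w a : w != x -> (shift x w == a) = (w == bump x a).
Proof. by move=> w_x; apply/eqP/eqP => [<-|->]; rewrite ?bump_shift ?shift_bump. Qed.

Section DeleteIsolated.
Variables (G : mgraph) (x : nat).
Hypothesis x_isolated : isolated G x.
Let G' := del_vertex G x.

Lemma isolated_adj a b : adj G a b -> a != x /\ b != x.
Proof.
case/andP: x_isolated => _ /allP x_free /adj_inP[j _ /andP[j_lt /=]].
have /x_free/andP[x1 x2] := mem_nth (0, 0) j_lt.
by case/orP => /andP[/eqP <- /eqP <-].
Qed.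

Lemma reach_isolated w : reach G w x -> w = x.
Proof.
case=> p; case/lastP: p => [//|p z]; rewrite rcons_path last_rcons => /andP[_ + z_x].
by rewrite z_x => /isolated_adj[_]; rewrite eqxx.
Qed.

Lemma joins_del_vertex j a b : joins G' j a b = joins G j (bump x a) (bump x b).
Proof.
case/andP: x_isolated => _ /allP x_free.
rewrite /joins /G' /del_vertex /= size_map; case j_lt: (j < size (edges G)) => //=.
have /x_free/andP[x1 x2] := mem_nth (0, 0) j_lt.
by rewrite (nth_map (0, 0)) //= !shift_eq.
Qed.

Lemma adj_del_vertex a b : adj G' a b = adj G (bump x a) (bump x b).
Proof. by apply/adj_inP/adj_inP => -[j _ ab]; exists j; rewrite ?joins_del_vertex in ab *. Qed.

Lemma walk_del_vertex u p : u != x -> path (adj G') (shift x u) p ->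
  path (adj G) u (map (bump x) p).
Proof.
move=> u_x walk; rewrite -{1}(bump_shift u_x) path_map; apply: sub_path walk => a b.
by rewrite /= adj_del_vertex.
Qed.

Lemma walk_to_del_vertex u p : path (adj G) u p ->
  path (adj G') (shift x u) (map (shift x) p).
Proof.
elim: p u => //= y p IHp u /andP[uy /IHp ->]; rewrite andbT adj_del_vertex.
by case: (isolated_adj uy) => u_x y_x; rewrite !bump_shift.
Qed.

Lemma reach_del_vertex u v : u != x -> v != x ->
  reach G' (shift x u) (shift x v) <-> reach G u v.
Proof.
move=> u_x v_x; split=> -[p walk p_end].
  exists (map (bump x) p); first exact: walk_del_vertex.
  by rewrite -{1}(bump_shift u_x) last_map p_end bump_shift.
by exists (map (shift x) p); rewrite ?walk_to_del_vertex // last_map p_end.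
Qed.

Lemma dist_ge_del_vertex u v d : u != x -> v != x ->
  dist_ge G u v d -> dist_ge G' (shift x u) (shift x v) d.
Proof.
move=> u_x v_x uv_d p walk p_end; rewrite -(size_map (bump x)).
apply: uv_d; first exact: walk_del_vertex.
by rewrite -{1}(bump_shift u_x) last_map p_end bump_shift.
Qed.

Let other w := (w < nv G) && (w != x).

Lemma isolated_marker ms : component_markers G (vertex G) ms -> (x, x, 0) \in ms.
Proof.
case=> ms_marks _ /(_ x)[|m m_in /reach_sym/reach_isolated b_x]; first by case/andP: x_isolated.
have [_ _ b_t b_t_gap] := ms_marks m m_in.
have t_x : tip m = x by apply: reach_isolated; apply: reach_sym; rewrite -b_x.
have gap0 : gap m = 0 by apply/eqP; rewrite -leqn0 (b_t_gap [::]) //= b_x t_x.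
by case: m b_x t_x gap0 m_in {b_t b_t_gap} => [[b t] d] /= -> -> ->.
Qed.

Lemma markers_del_isolated ms : component_markers G (vertex G) ms ->
  component_markers G other (rem (x, x, 0) ms).
Proof.
move=> /[dup] ms_markers [ms_marks ms_apart ms_cover].
have x_in := isolated_marker ms_markers.
have in_rem m : m \in rem (x, x, 0) ms = (m != (x, x, 0)) && (m \in ms).
  by rewrite mem_rem_uniq // (component_markers_uniq ms_markers).
split.
- move=> m; rewrite in_rem => /andP[m_x m_in]; have [b_lt t_lt b_t b_t_gap] := ms_marks m m_in.
  have b_x : base m != x.
    apply: contraNneq m_x => b_x; apply/eqP/(markers_disjoint ms_markers m_in x_in).
    by rewrite b_x; apply: reach_refl.
  have t_x : tip m != x.
    by apply: contra_neq _ b_x => t_x; apply: reach_isolated; rewrite -t_x.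
  by split; rewrite /other ?b_x ?t_x ?andbT.
- exact: subseq_pairwise (rem_subseq _ _) ms_apart.
- move=> w /andP[w_lt w_x]; have [m m_in w_m] := ms_cover w w_lt.
  exists m => //; rewrite in_rem m_in andbT; apply: contra_neq _ w_x => m_x.
  by apply: reach_isolated; rewrite m_x in w_m.
Qed.

Lemma spectator_bound_del_vertex s : spectator_bound G s -> spectator_bound G' s.
Proof.
case=> ms ms_markers count.
have x_lt : x < nv G by case/andP: x_isolated.
have x_in := isolated_marker ms_markers.
apply: (spectator_bound_map (phi := shift x) _ _ _ (markers_del_isolated ms_markers)
         (gap' := fun m => gap m)).
- by move=> w /andP[w_lt /eqP w_x]; rewrite /G' /= shiftE /unbump; case: (ltnP x w); lia.
- move=> w' w'_lt; exists (bump x w'); last exact: shift_bump.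
  by rewrite /other eq_sym neq_bump andbT /bump; case: (leqP x w'); rewrite /G' /= in w'_lt *; lia.
- by move=> u v /andP[_ u_x] /andP[_ v_x]; apply: reach_del_vertex.
- move=> m m_in; have [/(_ m m_in)[/andP[_ b_x] /andP[_ t_x] _ b_t_gap] _ _] :=
    markers_del_isolated ms_markers.
  exact: dist_ge_del_vertex.
- have ms_size : 0 < size ms by case: (ms) x_in.
  by move: count; rewrite (big_rem _ x_in) size_rem // /G' /=; set n := size ms; lia.
Qed.

End DeleteIsolated.

(** * Deleting an edge *)

Section RemoveAdjacency.
Variables (G G' : mgraph) (x y : nat).
Hypothesis adj_sub : forall a b, adj G' a b -> adj G a b.
Hypothesis adj_sup : forall a b, adj G a b ->
  adj G' a b \/ (a = x /\ b = y) \/ (a = y /\ b = x).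

Let near w := reach G' w x \/ reach G' w y.

Lemma walk_split w p : path (adj G) w p ->
  reach G' w (last w p) \/ near w /\ near (last w p).
Proof.
elim: p w => [|w1 p IHp] w /=; first by left; apply: reach_refl.
case/andP => /adj_sup[ww1|[[-> ->]|[-> ->]]] /IHp.
- case=> [w1_end|[[w1_x|w1_y] near_end]]; [left|right|right].
  + exact: reach_trans (reach_adj ww1) w1_end.
  + by split=> //; left; apply: reach_trans (reach_adj ww1) w1_x.
  + by split=> //; right; apply: reach_trans (reach_adj ww1) w1_y.
- case=> [y_end|[_ near_end]]; right; split => //; try by left; apply: reach_refl.
  by right; apply: reach_sym.
- case=> [x_end|[_ near_end]]; right; split => //; try by right; apply: reach_refl.
  by left; apply: reach_sym.
Qed.

Lemma reach_split w z : reach G w z -> reach G' w z \/ near w /\ near z.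
Proof. by case=> p walk <-; apply: walk_split. Qed.

Lemma reach_bridged u v : reach G' x y -> reach G u v -> reach G' u v.
Proof.
move=> x_y /reach_split[//|[u_near v_near]].
have to_x w : near w -> reach G' w x.
  by case=> // w_y; apply: reach_trans w_y (reach_sym x_y).
exact: reach_trans (to_x u u_near) (reach_sym (to_x v v_near)).
Qed.

Hypotheses (wfG : wf G) (nv_eq : nv G' = nv G).
Hypotheses (xy : adj G x y) (x_y_apart : ~ reach G' x y).

Lemma split_marker m : marks G (vertex G) m -> reach G' (base m) x ->
  exists e1 e2, [/\ marks G' (vertex G') e1, marks G' (vertex G') e2,
                    reach G' (base e1) x, reach G' (base e2) y &
                    gap m <= gap e1 + gap e2 + 1].
Proof.
move=> [b_lt t_lt b_t b_t_gap] b_x; have [x_lt y_lt _] := adj_in_vertices wfG xy.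
rewrite /vertex nv_eq in b_lt t_lt x_lt y_lt *.
have [t_x|t_y] : reach G' (tip m) x \/ reach G' (tip m) y.
  case: (reach_split b_t) => [b_t'|[_ near_t] //].
  by left; apply: reach_trans (reach_sym b_t') b_x.
- exists m, (y, y, 0); split => //; last by rewrite addn0 leq_addr.
  + split=> //; first exact: reach_trans b_x (reach_sym t_x).
    by apply: (dist_ge_sub adj_sub).
  + exact: marks_trivial.
  + exact: reach_refl.
- have [p [walk p_end p_min]] := shortest_walk b_x.
  have [q [walk' q_end q_min]] := shortest_walk (reach_sym t_y).
  exists (base m, x, size p), (y, tip m, size q); split => //; last first.
  + have detour : path (adj G) (base m) (p ++ y :: q).
      by rewrite cat_path (sub_path adj_sub walk) /= p_end xy (sub_path adj_sub walk').
    have := b_t_gap _ detour; rewrite last_cat /= q_end size_cat /=; lia.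
  + exact: reach_refl.
  + by split=> //; apply: reach_sym.
Qed.

Section SplitComponent.
Variables (ms : seq marker) (m0 : marker).
Hypotheses (ms_markers : component_markers G (vertex G) ms) (m0_in : m0 \in ms).
Hypothesis m0_x : reach G' (base m0) x.

Lemma mem_rem_markers m : m \in rem m0 ms = (m != m0) && (m \in ms).
Proof. by rewrite mem_rem_uniq // (component_markers_uniq ms_markers). Qed.

Lemma rem_markers_not_near m : m \in rem m0 ms -> ~ near (base m).
Proof.
rewrite mem_rem_markers => /andP[m_m0 m_in] near_m; move/eqP: m_m0; apply.
have x_m0 : reach G x (base m0) by apply: (reach_sub adj_sub); apply: reach_sym.
have y_m0 : reach G y (base m0) by apply: reach_trans (reach_sym (reach_adj xy)) x_m0.
apply: (markers_disjoint ms_markers m_in m0_in).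
by case: near_m => /(reach_sub adj_sub) m_xy; apply: reach_trans m_xy _.
Qed.

Lemma rem_markers_reach m w : m \in rem m0 ms -> reach G w (base m) -> reach G' w (base m).
Proof. by move=> m_in /reach_split[//|[_ /(rem_markers_not_near m_in)]]. Qed.

Lemma split_markers e1 e2 : marks G' (vertex G') e1 -> marks G' (vertex G') e2 ->
  reach G' (base e1) x -> reach G' (base e2) y ->
  component_markers G' (vertex G') [:: e1, e2 & rem m0 ms].
Proof.
have [ms_marks ms_apart ms_cover] := ms_markers.
move=> e1_marks e2_marks e1_x e2_y; split.
- move=> m; rewrite 2!in_cons => /or3P[/eqP->|/eqP->|m_in] //.
  have [b_lt t_lt b_t b_t_gap] : marks G (vertex G) m.
    by apply: ms_marks; move: m_in; rewrite mem_rem_markers => /andP[].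
  rewrite /vertex nv_eq; split => //; last exact: (dist_ge_sub adj_sub).
  exact: reach_sym (rem_markers_reach m_in (reach_sym b_t)).
- have apart_rem e : near (base e) -> all (apart G' e) (rem m0 ms).
    move=> near_e; apply/allP => m m_in; apply/asboolP => e_m.
    apply: (rem_markers_not_near m_in).
    by case: near_e => [e_x|e_y]; [left|right]; apply: reach_trans (reach_sym e_m) _.
  rewrite /= !apart_rem ?andbT ?andTb; [|by right|by left].
  apply/andP; split; first by apply/asboolP => e1_e2; apply: x_y_apart;
    apply: reach_trans (reach_sym e1_x) (reach_trans e1_e2 e2_y).
  apply: subseq_pairwise (rem_subseq _ _) _; apply: sub_pairwise ms_apart => m m'.
  by apply: contra => /asboolP/(reach_sub adj_sub) m_m'; apply/asboolP.
- move=> w; rewrite /vertex nv_eq => w_lt.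
  have [w_m0|w_m0] := EM (reach G w (base m0)).
    have x_m0 : reach G x (base m0) by apply: (reach_sub adj_sub); apply: reach_sym.
    have [w_x|[[w_x|w_y] _]] := reach_split (reach_trans w_m0 (reach_sym x_m0)).
    + by exists e1; rewrite ?mem_head //; apply: reach_trans w_x (reach_sym e1_x).
    + by exists e1; rewrite ?mem_head //; apply: reach_trans w_x (reach_sym e1_x).
    + by exists e2; rewrite ?inE ?eqxx ?orbT //; apply: reach_trans w_y (reach_sym e2_y).
  have [m m_in w_m] := ms_cover w w_lt.
  have m_rem : m \in rem m0 ms.
    by rewrite mem_rem_markers m_in andbT; apply/eqP => m_m0; apply: w_m0; rewrite -m_m0.
  by exists m; [rewrite !inE m_rem !orbT | apply: rem_markers_reach].
Qed.

Lemma spectator_bound_split s :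
  nv G <= s + size ms + \sum_(m <- ms) gap m -> spectator_bound G' s.
Proof.
move=> count; have [ms_marks _ _] := ms_markers.
have [e1 [e2 [e1_marks e2_marks e1_x e2_y gap_le]]] := split_marker (ms_marks m0 m0_in) m0_x.
exists [:: e1, e2 & rem m0 ms]; first exact: split_markers.
have ms_size : 0 < size ms by case: (ms) m0_in.
move: count; rewrite (big_rem _ m0_in) !big_cons /= size_rem // nv_eq.
rewrite prednK //; set n := size ms; lia.
Qed.

End SplitComponent.

End RemoveAdjacency.

Lemma spectator_bound_remove_adjacency G G' x y s :
  (forall a b, adj G' a b -> adj G a b) ->
  (forall a b, adj G a b -> adj G' a b \/ (a = x /\ b = y) \/ (a = y /\ b = x)) ->
  wf G -> nv G' = nv G -> adj G x y -> spectator_bound G s -> spectator_bound G' s.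
Proof.
move=> adj_sub adj_sup wfG nv_eq xy [ms ms_markers count].
have [x_y|x_y_apart] := EM (reach G' x y).
  apply: (@spectator_bound_map G G' (vertex G) id _ _ _ s (fun m => gap m) _ ms_markers).
  - by move=> w; rewrite /vertex nv_eq.
  - by move=> w; rewrite nv_eq; exists w.
  - move=> u v _ _; split; first exact: reach_sub.
    exact: (reach_bridged adj_sup x_y).
  - by move=> m m_in; apply: (dist_ge_sub adj_sub); case: ms_markers => /(_ m m_in)[].
  - by rewrite nv_eq.
have [x_lt _ _] := adj_in_vertices wfG xy.
have [_ _ /(_ x x_lt)[m0 m0_in /(reach_split adj_sup) x_m0]] := ms_markers.
have adj_sup' a b : adj G a b -> adj G' a b \/ (a = y /\ b = x) \/ (a = x /\ b = y).
  by case/adj_sup => [|[]]; auto.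
have yx : adj G y x by rewrite adj_sym.
have y_x_apart : ~ reach G' y x by move/reach_sym.
have split_x m0_x :=
  spectator_bound_split adj_sub adj_sup wfG nv_eq xy x_y_apart ms_markers m0_in m0_x count.
have split_y m0_y :=
  spectator_bound_split adj_sub adj_sup' wfG nv_eq yx y_x_apart ms_markers m0_in m0_y count.
by case: x_m0 => [/reach_sym/split_x|[_ [/split_x|/split_y]]].
Qed.

Lemma nth_take_drop (T : Type) (x0 : T) s i j : i < size s ->
  nth x0 (take i s ++ drop i.+1 s) j = nth x0 s (bump i j).
Proof.
move=> i_lt; rewrite nth_cat size_take i_lt /bump.
by case: ltnP => j_i; rewrite ?nth_take ?nth_drop //; congr nth; lia.
Qed.

Lemma size_take_drop (T : Type) (s : seq T) i : i < size s ->
  size (take i s ++ drop i.+1 s) = (size s).-1.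
Proof. by move=> i_lt; rewrite size_cat size_take i_lt size_drop; lia. Qed.

Section DeleteEdge.
Variables (G : mgraph) (i : nat).
Hypothesis i_lt : i < size (edges G).
Let G' := del_edge G i.

Lemma joins_del_edge j a b : joins G' j a b = joins G (bump i j) a b.
Proof.
rewrite /joins /G' /del_edge /= nth_take_drop // size_take_drop //; congr andb.
by rewrite /bump; case: leqP; lia.
Qed.

Lemma adj_del_edge_sub a b : adj G' a b -> adj G a b.
Proof. by case/adj_inP => j _; rewrite joins_del_edge => ab; apply/adj_inP; exists (bump i j). Qed.

Lemma adj_del_edge_sup a b : adj G a b -> adj G' a b \/
  (a = (nth (0, 0) (edges G) i).1 /\ b = (nth (0, 0) (edges G) i).2) \/
  (a = (nth (0, 0) (edges G) i).2 /\ b = (nth (0, 0) (edges G) i).1).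
Proof.
case/adj_inP => j _; have [-> /andP[_ /orP[] /andP[/eqP <- /eqP <-]]|j_i ab] := eqVneq j i.
- by right; left.
- by right; right.
left; apply/adj_inP; exists (unbump i j) => //.
by rewrite joins_del_edge unbumpKcond (negbTE j_i).
Qed.

Lemma spectator_bound_del_edge s : wf G -> spectator_bound G s -> spectator_bound G' s.
Proof.
move=> wfG; apply: (spectator_bound_remove_adjacency adj_del_edge_sub adj_del_edge_sup) => //.
by apply/adj_inP; exists i; rewrite // /joins i_lt !eqxx.
Qed.

End DeleteEdge.

(** * Contracting an edge *)

Section Contract.
Variables (G : mgraph) (i : nat).
Hypotheses (wfG : wf G) (i_lt : i < size (edges G)).
Let a := (nth (0, 0) (edges G) i).1.
Let b := (nth (0, 0) (edges G) i).2.
Let merge w := shift b (if w == b then a else w).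
Let G' := contract G i.

Lemma joins_ab : joins G i a b.
Proof. by rewrite /joins i_lt !eqxx. Qed.

Lemma adj_ab : adj G a b.
Proof. by apply/adj_inP; exists i => //; apply: joins_ab. Qed.

Lemma ab_vertices : [/\ a < nv G, b < nv G & a != b].
Proof. exact: joins_vertices wfG joins_ab. Qed.

Lemma joins_contract j p q : joins G' j p q =
  (j < (size (edges G)).-1) &&
  (let e := nth (0, 0) (edges G) (bump i j) in
   ((merge e.1 == p) && (merge e.2 == q)) || ((merge e.1 == q) && (merge e.2 == p))).
Proof.
rewrite /joins /G' /contract /= size_map size_take_drop //.
case j_lt: (j < _) => //=.
by rewrite (nth_map (0, 0)) ?size_take_drop // nth_take_drop.
Qed.

Lemma merge_ab : merge a = merge b.
Proof. by case: ab_vertices => _ _ a_b; rewrite /merge eqxx (negbTE a_b). Qed.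

Lemma merge_eq_ab w : merge w = merge a -> w = a \/ w = b.
Proof.
have [_ _ a_b] := ab_vertices; rewrite /merge (negbTE a_b).
have [->|w_b] := eqVneq w b; first by right.
by move/(congr1 (bump b)); rewrite !bump_shift // => ->; left.
Qed.

Lemma merge_inj w z : merge w = merge z -> merge w != merge a -> w = z.
Proof.
move=> wz w_ab; have w_b : w != b by apply: contraNneq w_ab => ->; rewrite merge_ab.
have z_b : z != b by apply: contraNneq w_ab => z_b; rewrite wz z_b merge_ab.
by move: wz; rewrite /merge (negbTE w_b) (negbTE z_b) => /(congr1 (bump b)); rewrite !bump_shift.
Qed.

Lemma merge_vertex w : w < nv G -> merge w < nv G'.
Proof.
have [a_lt b_lt /eqP a_b] := ab_vertices; rewrite /G' /= /merge shiftE /unbump.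
by case: eqVneq => [_|/eqP w_b]; case: ltnP; lia.
Qed.

Lemma merge_onto w' : w' < nv G' -> exists2 w, w < nv G & merge w = w'.
Proof.
have [a_lt b_lt _] := ab_vertices; move=> w'_lt; exists (bump b w').
  by move: w'_lt; rewrite /G' /= /bump; case: leqP; lia.
by rewrite /merge eq_sym (negbTE (neq_bump _ _)) shift_bump.
Qed.

Lemma adj_contract_lift p q : adj G' p q ->
  exists w z, [/\ adj G w z, merge w = p & merge z = q].
Proof.
case/adj_inP => j _; rewrite joins_contract => /andP[j_lt].
have bj_lt : bump i j < size (edges G) by rewrite /bump; case: leqP; lia.
set e := nth _ _ _ => /orP[] /andP[/eqP e1 /eqP e2].
- exists e.1, e.2; split => //; apply/adj_inP; exists (bump i j) => //.
  by rewrite /joins bj_lt !eqxx.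
- exists e.2, e.1; split => //; apply/adj_inP; exists (bump i j) => //.
  by rewrite /joins bj_lt !eqxx orbT.
Qed.

Lemma adj_contract w z : adj G w z -> merge w != merge z -> adj G' (merge w) (merge z).
Proof.
case/adj_inP => j _ wz; have [j_i|j_i] := eqVneq j i.
  by rewrite j_i in wz; case: (joins_ends wz joins_ab) => -[-> ->]; rewrite merge_ab eqxx.
move=> _; apply/adj_inP; exists (unbump i j) => //.
have j_lt : j < size (edges G) by case/andP: wz.
rewrite joins_contract unbumpKcond (negbTE j_i) add0n /=.
case/andP: wz => _ /orP[] /andP[/eqP -> /eqP ->]; rewrite !eqxx ?orbT andbT.
all: by rewrite /unbump; move/eqP: j_i; case: ltnP; lia.
Qed.

Lemma walk_contract w p : path (adj G) w p ->
  exists2 p', path (adj G') (merge w) p' & last (merge w) p' = merge (last w p).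
Proof.
elim: p w => [|w1 p IHp] w /=; first by exists [::].
case/andP => ww1 /IHp[p' walk' p'_end].
have [w_w1|w_w1] := eqVneq (merge w) (merge w1); first by exists p'; rewrite w_w1.
by exists (merge w1 :: p'); rewrite /= ?adj_contract.
Qed.

Lemma reach_contract u v : reach G u v -> reach G' (merge u) (merge v).
Proof. by case=> p /walk_contract[p' walk' p'_end] <-; exists p'. Qed.

Lemma walk_lift_avoid u r : path (adj G') (merge u) r ->
  merge a \notin belast (merge u) r -> exists2 r0, path (adj G) u r0 & map merge r0 = r.
Proof.
elim: r u => [|q r IHr] u /=; first by exists [::].
case/andP => /adj_contract_lift[w [z [wz w_u <-]]] walk.
rewrite inE negb_or => /andP[u_ab /(IHr z walk)[r0 walk0 <-]].
have <- : w = u by apply: merge_inj; rewrite // w_u eq_sym.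
by exists (z :: r0); rewrite /= ?wz.
Qed.

Lemma walk_lift_to_merged u r : path (adj G') (merge u) r ->
  last (merge u) r = merge a -> merge a \notin belast (merge u) r ->
  exists r0, [/\ path (adj G) u r0, last u r0 = a \/ last u r0 = b & size r0 = size r].
Proof.
move=> walk r_end /(walk_lift_avoid walk)[r0 walk0 r0_r]; exists r0; split => //.
  by apply: merge_eq_ab; rewrite -r_end -r0_r last_map.
by rewrite -r0_r size_map.
Qed.

Lemma walk_lift_from_merged v r : path (adj G') (merge a) r ->
  last (merge a) r = merge v -> merge a \notin r ->
  exists z r0, [/\ z = a \/ z = b, path (adj G) z r0, last z r0 = v & size r0 = size r].
Proof.
case: r => [_ /esym/merge_eq_ab v_ab _|q r]; first by exists v, [::].
rewrite /= inE negb_or => /andP[/adj_contract_lift[w [z [wz w_ab z_q]]] walk] r_end.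
case/andP => q_ab r_ab.
have walk' : path (adj G') (merge z) r by rewrite z_q.
have [|r0 walk0 r0_r] := walk_lift_avoid walk'.
  by rewrite z_q; apply/negP => /mem_belast; rewrite inE (negbTE q_ab) (negbTE r_ab).
have end_ab : last q r != merge a.
  by apply: contraTneq (mem_last q r) => ->; rewrite inE (negbTE q_ab) (negbTE r_ab).
exists w, (z :: r0); split; rewrite /= ?wz ?size_map ?r0_r //; first exact: merge_eq_ab.
  by apply: merge_inj; rewrite -last_map r0_r z_q // r_end.
by rewrite -r0_r size_map.
Qed.

Lemma walk_lift_exact u v r : path (adj G') (merge u) r -> last (merge u) r = merge v ->
  merge a \notin merge u :: r -> exists p, [/\ path (adj G) u p, last u p = v & size p = size r].
Proof.
move=> walk r_end r_ab; have [|p walk0 p_r] := walk_lift_avoid walk.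
  by apply: contra r_ab => /mem_belast.
exists p; split => //; last by rewrite -p_r size_map.
have end_ab : last (merge u) r != merge a by apply: contraNneq r_ab => <-; rewrite mem_last.
by apply: merge_inj; rewrite -last_map p_r.
Qed.

Lemma ab_link z1 z2 : z1 = a \/ z1 = b -> z2 = a \/ z2 = b ->
  exists p, [/\ path (adj G) z1 p, last z1 p = z2 & size p <= 1].
Proof.
have ba : adj G b a by rewrite adj_sym adj_ab.
by case=> -> [] ->; [exists [::] | exists [:: b] | exists [:: a] | exists [::]];
  rewrite /= ?adj_ab ?ba.
Qed.

Lemma walk_lift_contract_uniq u v r : path (adj G') (merge u) r ->
  uniq (merge u :: r) -> last (merge u) r = merge v ->
  exists p, [/\ path (adj G) u p, last u p = v & size p <= (size r).+1].
Proof.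
move=> walk r_uniq r_end.
have [m_in|m_out] := boolP (merge a \in merge u :: r); last first.
  by have [p [walk0 p_end p_size]] := walk_lift_exact walk r_end m_out; exists p; rewrite p_size.
have [u_ab|u_ab] := eqVneq (merge u) (merge a).
  rewrite u_ab in walk r_uniq r_end; case/andP: r_uniq => m_r _.
  have [z [p [z_ab walk0 p_end p_size]]] := walk_lift_from_merged walk r_end m_r.
  have [q [walk1 q_end q_size]] := ab_link (merge_eq_ab u_ab) z_ab.
  exists (q ++ p); rewrite cat_path walk1 q_end walk0 last_cat q_end p_end size_cat p_size.
  by split => //; lia.
move: m_in; rewrite inE eq_sym (negbTE u_ab) /= => m_in.
case/splitPr: m_in walk r_uniq r_end => r1 r2.
rewrite cat_path -cat_cons cat_uniq last_cat /= => /andP[walk1 /andP[step walk2]].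
case/and3P => _ /norP[m_r1 _] /andP[m_r2 _] r2_end.
have m_r1' : merge a \notin belast (merge u) (rcons r1 (merge a)).
  by rewrite belast_rcons.
have walk1' : path (adj G') (merge u) (rcons r1 (merge a)) by rewrite rcons_path walk1.
have [p1 [walk1'' p1_end p1_size]] := walk_lift_to_merged walk1' (last_rcons _ _ _) m_r1'.
have [z [p2 [z_ab walk2' p2_end p2_size]]] := walk_lift_from_merged walk2 r2_end m_r2.
have [q [walk_q q_end q_size]] := ab_link p1_end z_ab.
exists (p1 ++ q ++ p2); rewrite !cat_path walk1'' walk_q q_end walk2' !last_cat q_end p2_end.
by rewrite !size_cat p1_size p2_size size_rcons /=; split => //; lia.
Qed.

Lemma walk_lift_contract u v r : path (adj G') (merge u) r -> last (merge u) r = merge v ->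
  exists p, [/\ path (adj G) u p, last u p = v & size p <= (size r).+1].
Proof.
move=> walk; case: (shortenP walk) => r' walk' r'_uniq r'_sub r'_end.
have [p [walk0 p_end p_size]] := walk_lift_contract_uniq walk' r'_uniq r'_end.
exists p; split => //; apply: leq_trans p_size _; rewrite ltnS.
by apply: uniq_leq_size r'_sub; case/andP: r'_uniq.
Qed.

Lemma reach_contract_pull u v : reach G' (merge u) (merge v) -> reach G u v.
Proof.
by case=> r walk /(walk_lift_contract walk)[p [walk0 p_end _]]; exists p.
Qed.

Lemma dist_ge_contract u v d : dist_ge G u v d -> dist_ge G' (merge u) (merge v) d.-1.
Proof.
move=> uv_d r walk /(walk_lift_contract walk)[p [walk0 p_end p_size]].
by have := uv_d p walk0 p_end; lia.
Qed.

Lemma dist_ge_contract_far u v d : ~ reach G u a ->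
  dist_ge G u v d -> dist_ge G' (merge u) (merge v) d.
Proof.
move=> u_a uv_d r walk r_end; have [r_ab|r_ab] := boolP (merge a \in merge u :: r).
  by case: u_a; apply: reach_contract_pull; apply: walk_reach_mem walk r_ab.
by have [p [walk0 p_end <-]] := walk_lift_exact walk r_end r_ab; apply: uv_d.
Qed.

Lemma spectator_bound_contract s : spectator_bound G s -> spectator_bound G' s.
Proof.
case=> ms /[dup] ms_markers [ms_marks _ ms_cover] count.
have [a_lt _ _] := ab_vertices; have [ma ma_in a_ma] := ms_cover a a_lt.
pose gap' m := gap m - (m == ma).
apply: (spectator_bound_map (phi := merge) _ _ _ ms_markers (gap' := gap')).
- exact: merge_vertex.
- exact: merge_onto.
- by move=> u v _ _; split; [apply: reach_contract_pull | apply: reach_contract].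
- move=> m m_in; have [_ _ _ b_t_gap] := ms_marks m m_in.
  rewrite /gap'; have [m_ma|m_ma] := eqVneq m ma.
    by rewrite /= subn1; apply: dist_ge_contract.
  rewrite /= subn0; apply: (dist_ge_contract_far _ b_t_gap) => b_a; move/eqP: m_ma; apply.
  exact: (markers_disjoint ms_markers m_in ma_in (reach_trans b_a a_ma)).
- rewrite (big_rem _ ma_in) (eq_big_seq (fun m => gap m)) ?(big_rem _ ma_in) /gap' ?eqxx /=.
    by move: count; rewrite (big_rem _ ma_in) /G' /=; set n := size ms; lia.
  move=> m; rewrite mem_rem_uniq ?(component_markers_uniq ms_markers) // inE.
  by case/andP => /negbTE ->; rewrite subn0.
Qed.

End Contract.

(** * Isomorphism *)

Lemma normp_eq p q : normp p = normp q -> p = q \/ p = (q.2, q.1).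
Proof.
case: p q => [a b] [c d]; rewrite /normp /= => -[min_eq max_eq].
suff : a = c /\ b = d \/ a = d /\ b = c by case=> -[-> ->]; [left | right].
lia.
Qed.

Section Isomorphism.
Variables (G G' : mgraph) (f : nat -> nat).
Hypotheses (wfG : wf G) (nv_eq : nv G = nv G').
Hypothesis f_vertex : forall w, w < nv G -> f w < nv G'.
Hypothesis f_inj : forall w w', w < nv G -> w' < nv G -> f w = f w' -> w = w'.
Hypothesis f_edges : perm_eq [seq normp (f e.1, f e.2) | e <- edges G] (map normp (edges G')).

Lemma adj_iso a b : adj G a b -> adj G' (f a) (f b).
Proof.
case/adj_edge => e e_in e_ab.
have : normp (f e.1, f e.2) \in map normp (edges G').
  by rewrite -(perm_mem f_edges); apply/mapP; exists e.
case/mapP => e' e'_in /esym/normp_eq e'_e; have := adj_mem e'_in.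
by case: e_ab e'_e => -> [] -> //=; rewrite adj_sym.
Qed.

Lemma adj_iso_pull a q : a < nv G -> adj G' (f a) q -> exists2 z, adj G a z & f z = q.
Proof.
move=> a_lt /adj_edge[e' e'_in e'_aq].
have : normp e' \in [seq normp (f e.1, f e.2) | e <- edges G].
  by rewrite (perm_mem f_edges); apply: map_f.
case/mapP => e e_in e_e'; have e_adj := adj_mem e_in.
have [e1_lt e2_lt _] := adj_in_vertices wfG e_adj.
have /normp_eq[] : normp (f e.1, f e.2) = normp (f a, q).
  by rewrite -e_e'; case: e'_aq => -> //=; rewrite /normp /= minnC maxnC.
- by case=> /(f_inj e1_lt a_lt) <- <-; exists e.2.
- by case=> <- /(f_inj e2_lt a_lt) <-; exists e.1; rewrite // adj_sym.
Qed.

Lemma walk_iso_pull u r : u < nv G -> path (adj G') (f u) r ->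
  exists2 p, path (adj G) u p & map f p = r.
Proof.
elim: r u => [|q r IHr] u u_lt /=; first by exists [::].
case/andP => /(adj_iso_pull u_lt)[z uz <-] /IHr[|p walk <-].
  by case: (adj_in_vertices wfG uz).
by exists (z :: p); rewrite /= ?uz.
Qed.

Lemma walk_iso_pull_end u v r : u < nv G -> v < nv G -> path (adj G') (f u) r ->
  last (f u) r = f v -> exists p, [/\ path (adj G) u p, last u p = v & size p = size r].
Proof.
move=> u_lt v_lt /(walk_iso_pull u_lt)[p walk <-]; rewrite last_map size_map => p_end.
have p_lt : all (fun w => w < nv G) (u :: p) by rewrite /= u_lt (walk_vertices wfG walk).
by exists p; split => //; apply: (f_inj _ v_lt p_end); apply: (allP p_lt); apply: mem_last.
Qed.

Lemma iso_onto w' : w' < nv G' -> exists2 w, w < nv G & f w = w'.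
Proof.
have f_uniq : uniq (map f (iota 0 (nv G))).
  rewrite map_inj_in_uniq ?iota_uniq // => w z; rewrite !mem_iota; exact: f_inj.
have f_sub : {subset map f (iota 0 (nv G)) <= iota 0 (nv G')}.
  by move=> y /mapP[w]; rewrite mem_iota => w_lt ->; rewrite mem_iota f_vertex.
have f_size : size (iota 0 (nv G')) <= size (map f (iota 0 (nv G))).
  by rewrite size_map !size_iota nv_eq.
have [_ f_all] := uniq_min_size f_uniq f_sub f_size.
move=> w'_lt; have /mapP[w] : w' \in map f (iota 0 (nv G)) by rewrite f_all mem_iota.
by rewrite mem_iota => w_lt ->; exists w.
Qed.

Lemma spectator_bound_iso s : spectator_bound G s -> spectator_bound G' s.
Proof.
case=> ms /[dup] ms_markers [ms_marks _ _] count.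
apply: (spectator_bound_map (phi := f) _ _ _ ms_markers (gap' := fun m => gap m)).
- exact: f_vertex.
- exact: iso_onto.
- move=> u v u_lt v_lt; split; last first.
    case=> p walk <-; exists (map f p); rewrite ?last_map //.
    by rewrite path_map; apply: sub_path walk => ? ? /adj_iso.
  by case=> r walk /(walk_iso_pull_end u_lt v_lt walk)[p [walk0 p_end _]]; exists p.
- move=> m m_in r walk r_end; have [b_lt t_lt _ b_t_gap] := ms_marks m m_in.
  have [p [walk0 p_end <-]] := walk_iso_pull_end b_lt t_lt walk r_end.
  exact: b_t_gap.
- by rewrite -nv_eq.
Qed.

End Isomorphism.

(** * Minors *)

Lemma spectator_bound_minor_step G G' s : minor_step G G' -> wf G ->
  spectator_bound G s -> spectator_bound G' s.
Proof.
(* Contraction does not need the absence of edges parallel to [i]. *)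
case=> {G G'} [G x x_isolated | G i i_lt | G i [i_lt _] |
               G G' [nv_eq [f [f_vertex f_inj f_edges]]]] wfG.
- exact: spectator_bound_del_vertex.
- exact: spectator_bound_del_edge.
- exact: spectator_bound_contract.
- exact: (spectator_bound_iso wfG nv_eq f_vertex f_inj f_edges).
Qed.

Lemma spectator_bound_minor G H s : minor G H -> spectator_bound H s -> spectator_bound G s.
Proof.
elim=> // G1 G2 H_G1 IH step _ /IH; apply: spectator_bound_minor_step step _.
by case: H_G1.
Qed.

Theorem theorem4p2 (T : mgraph) (D : nat) :
  is_tree T -> diam_is T D -> sp_floor_is T (nv T - D - 1).
Proof.
move=> treeT diamT; have [wfT _ _] := treeT; split.
  by exists T; split=> //; split; [apply: ob_refl | apply: tree_sp].
move=> H s wfH T_H H_s; apply: (tree_spectator_bound treeT diamT).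
exact: (spectator_bound_minor T_H (spectator_bound_of_sp wfH H_s)).
Qed.
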